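(* Let $S$ and $T$ be finite sets and $E\subseteq S\times T$. For each $(s,t)\in E$ let $X_{st}$ be a random variable with distribution $\mathrm{Beta}(1+\alpha_{st},1+\beta_{st})$ (with $\alpha_{st},\beta_{st}\ge 0$), the $X_{st}$ being independent. For $y\in\mathbb{R}^S_{+}$ and $x\in[0,1]^E$ define \[ \mathcal I(y;x)=\sum_{t\in T}\Big(1-\prod_{(s,t)\in E} x_{st}^{\,y(s)}\Big). \] Let $\mathcal Y\subseteq\mathbb{R}^S_+$ be convex. Then both problems $\max_{y\in\mathcal Y}\mathcal I(y;\mathbb{E}[X])$ and $\max_{y\in\mathcal Y}\mathbb{E}[\mathcal I(y;X)]$ are concave maximization problems over the convex set $\mathcal Y$, i.e. the functions $y\mapsto \mathcal I(y;\mathbb{E}[X])$ and $y\mapsto\mathbb{E}[\mathcal I(y;X)]$ are concave on $\mathcal Y$.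
   Context: $x_{st}$ is interpreted as the failure probability of the edge $(s,t)$ in a bipartite influence graph, and $y(s)$ as the budget assigned to channel $s$; $\mathcal I(y;x)$ is the expected number of influenced nodes of $T$. *)

From HB Require Import structures.
From mathcomp Require Import all_boot all_order all_algebra.
From mathcomp Require Import all_classical all_reals all_analysis.
Set Implicit Arguments. Unset Strict Implicit. Unset Printing Implicit Defensive.
Import Order.TTheory GRing.Theory Num.Theory.
Import numFieldNormedType.Exports.
Local Open Scope classical_set_scope.
Local Open Scope ring_scope.

(* Unnormalised density of Beta(1+a, 1+b) on [0,1]: x^a (1-x)^b. *)
Definition beta_dens {R : realType} (a b : R) (x : R) : R :=
  x `^ a * (1 - x) `^ b.

Definition has_beta_law {R : realType} {d : measure_display} {Om : measurableType d}
    (P : probability Om R) (X : Om -> R) (a b : R) : Prop :=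
  forall A : set R, measurable A ->
    P (X @^-1` A) =
    (fine (\int[@lebesgue_measure R]_(x in A `&` `[0, 1]) (beta_dens a b x)%:E) /
     fine (\int[@lebesgue_measure R]_(x in `[0, 1]) (beta_dens a b x)%:E))%:E.

Definition mutually_independent {R : realType} {d : measure_display} {Om : measurableType d}
    {I : finType} (P : probability Om R) (E : {set I}) (X : I -> Om -> R) : Prop :=
  forall A : I -> set R, (forall e, measurable (A e)) ->
    P (\bigcap_(e in [set e | e \in E]) (X e @^-1` A e)) =
    (\prod_(e in E) P (X e @^-1` A e))%E.

Definition influence {R : realType} {S T : finType} (E : {set S * T})
    (y : S -> R) (x : S * T -> R) : R :=
  \sum_(t : T) (1 - \prod_(s : S | (s, t) \in E) x (s, t) `^ y s).

Definition convex_dom {R : realType} {S : finType} (Y : set (S -> R)) : Prop :=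
  forall y1 y2 (l : R), Y y1 -> Y y2 -> 0 <= l <= 1 ->
    Y (fun s => l * y1 s + (1 - l) * y2 s).

Definition concave_on {R : realType} {S : finType} (Y : set (S -> R)) (f : (S -> R) -> R) : Prop :=
  forall y1 y2 (l : R), Y y1 -> Y y2 -> 0 <= l <= 1 ->
    l * f y1 + (1 - l) * f y2 <= f (fun s => l * y1 s + (1 - l) * y2 s).

From HB Require Import structures.
From mathcomp Require Import all_boot all_order all_algebra.
From mathcomp Require Import all_classical all_reals all_analysis.
From mathcomp Require Import lra measurable_realfun.
Import Order.TTheory GRing.Theory Num.Theory.
Import numFieldNormedType.Exports.
Local Open Scope classical_set_scope.
Local Open Scope ring_scope.

(* Off the zeros of x, prod_s x_s^(y_s) = expR (sum_s y_s ln x_s) is the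
   exponential of a linear function of y, hence convex in y; at a zero x_s the
   factor is the indicator of y_s = 0, which is harmless for y >= 0.  Thus
   y |-> I(y; x) is concave on the nonnegative orthant for every x, which gives
   the first claim with x = E[X].  For the second, a Beta law is carried by
   [0, 1], so I(y; X) is almost surely bounded, hence integrable, and an
   expectation of concave functions is concave. *)

Section ProductOfPowers.
Context {R : realType}.

Lemma prod_powR_expR {I : finType} (Pr : pred I) (a w : I -> R) :
  (forall i, Pr i -> a i = 0 -> w i = 0) ->
  \prod_(i | Pr i) a i `^ w i = expR (\sum_(i | Pr i) w i * ln (a i)).
Proof.
move=> w0; rewrite expR_sum; apply: eq_bigr => i Pi.
have [ai0|ai0] := eqVneq (a i) 0; first by rewrite ai0 w0 // powRr0 mul0r expR0.
by rewrite /powR (negbTE ai0).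
Qed.

Lemma mulr_prod_powR_expR {I : finType} (Pr : pred I) (a w : I -> R) (l : R) :
  (forall i, Pr i -> a i = 0 -> l * w i = 0) ->
  l * \prod_(i | Pr i) a i `^ w i = l * expR (\sum_(i | Pr i) w i * ln (a i)).
Proof.
have [->|l0 lw0] := eqVneq l 0; first by rewrite !mul0r.
congr (_ * _); apply: prod_powR_expR => i Pi ai0.
by move/eqP: (lw0 i Pi ai0); rewrite mulf_eq0 (negbTE l0) => /eqP.
Qed.

Lemma convex_prod_powR {I : finType} (Pr : pred I) (a : I -> R) {u v : I -> R} {l : R} :
  (forall i, 0 <= u i) -> (forall i, 0 <= v i) -> 0 <= l <= 1 ->
  \prod_(i | Pr i) a i `^ (l * u i + (1 - l) * v i) <=
  l * \prod_(i | Pr i) a i `^ u i + (1 - l) * \prod_(i | Pr i) a i `^ v i.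
Proof.
move=> u0 v0 /andP[l0 l1].
have prod_ge0 w : 0 <= \prod_(i | Pr i) a i `^ w i.
  by apply: prodr_ge0 => i _; exact: powR_ge0.
have [/existsP[i /and3P[Pi /eqP ai0 mi0]]|] :=
  boolP [exists i, [&& Pr i, a i == 0 & l * u i + (1 - l) * v i != 0]].
  rewrite (bigD1 i) //= ai0 powR0 // mul0r.
  by rewrite addr_ge0 // mulr_ge0 // subr_ge0.
rewrite negb_exists => /forallP mix0.
have {}mix0 i : Pr i -> a i = 0 -> l * u i = 0 /\ (1 - l) * v i = 0.
  move=> Pi ai0; have := mix0 i; rewrite Pi ai0 eqxx /= negbK.
  have lu0 : 0 <= l * u i by rewrite mulr_ge0.
  have lv0 : 0 <= (1 - l) * v i by rewrite mulr_ge0 // subr_ge0.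
  by rewrite paddr_eq0 // => /andP[/eqP -> /eqP ->].
rewrite prod_powR_expR => [|i Pi /(mix0 i Pi)[-> ->]]; last by rewrite addr0.
rewrite mulr_prod_powR_expR => [|i Pi /(mix0 i Pi)[]//].
rewrite mulr_prod_powR_expR => [|i Pi /(mix0 i Pi)[]//].
under eq_bigr do rewrite mulrDl -!mulrA.
rewrite big_split -!mulr_sumr /=.
exact: (convex_expR (Itv01 l0 l1)).
Qed.

End ProductOfPowers.

Section Influence.
Context {R : realType} {S T : finType} (E : {set S * T}).

Lemma concave_influence (x : S * T -> R) :
  concave_on [set y | forall s, 0 <= y s] (influence E ^~ x).
Proof.
move=> y1 y2 l y1_ge0 y2_ge0 l01.
rewrite /influence !mulr_sumr -big_split; apply: ler_sum => t _ /=.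
have := convex_prod_powR (fun s => (s, t) \in E) (fun s => x (s, t)) y1_ge0 y2_ge0 l01.
lra.
Qed.

Lemma influence_bound {y : S -> R} {x : S * T -> R} :
  (forall s, 0 <= y s) -> (forall e, e \in E -> 0 <= x e <= 1) ->
  0 <= influence E y x <= #|T|%:R.
Proof.
move=> y_ge0 x01; rewrite /influence; apply/andP; split.
  apply: sumr_ge0 => t _; rewrite subr_ge0; apply: prodr_ile1 => s stE.
  have /andP[x0 x1] := x01 _ stE.
  have := @ge0_ler_powR R (y s) (y_ge0 s) (x (s, t)) 1; rewrite powR1 !nnegrE /=.
  by rewrite powR_ge0 => ->.
rewrite -sumr_const; apply: ler_sum => t _.
by rewrite lerBlDr lerDl prodr_ge0 // => s _; exact: powR_ge0.
Qed.

End Influence.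

Section Expectation.
Context {R : realType} {d : measure_display} {Om : measurableType d}.
Variable P : probability Om R.

Lemma integrable_ae_bounded {h : Om -> R} {M : R} :
  0 <= M -> measurable_fun setT h -> {ae P, forall w, `|h w| <= M} ->
  P.-integrable setT (EFin \o h).
Proof.
move=> M0 mh hM; apply/integrableP; split; first exact/measurable_EFinP.
apply: le_lt_trans (integral_le_bound (M%:E) _ _ _ _) _ => //.
- exact/measurable_EFinP.
- by apply: filterS hM => w hw _; rewrite lee_fin.
- by rewrite lte_mul_pinfty // (le_lt_trans (probability_le1 P measurableT)) ?ltry.
Qed.

Lemma concave_on_expectation (S : finType) (Y : set (S -> R))
    (g : (S -> R) -> Om -> R) :
  convex_dom Y -> (forall y, Y y -> P.-integrable setT (EFin \o g y)) ->
  (forall w, concave_on Y (g ^~ w)) -> concave_on Y (fun y => fine 'E_P[g y]).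
Proof.
move=> cY ig cg y1 y2 l Y1 Y2 l01.
have Rintegral_expectation y : fine 'E_P[g y] = \int[P]_w g y w.
  by rewrite unlock.
rewrite !Rintegral_expectation -RintegralZl ?ig // -RintegralZl ?ig //.
have igZ y k : Y y -> P.-integrable setT (EFin \o (fun w => k * g y w)).
  by move=> Yy; exact: integrableZl (ig _ Yy).
rewrite -RintegralD ?igZ //; apply: le_Rintegral => //.
- exact: integrableD (igZ _ _ Y1) (igZ _ _ Y2).
- exact: ig (cY _ _ _ Y1 Y2 l01).
- by move=> w _; exact: cg.
Qed.

Lemma measurable_influence (S T : finType) (E : {set S * T})
    (Z : S * T -> Om -> R) (y : S -> R) :
  (forall e, measurable_fun setT (Z e)) ->
  measurable_fun setT (fun w => influence E y (Z ^~ w)).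
Proof.
move=> mZ; apply: measurable_sum => t.
apply: measurable_funB; first exact: measurable_cst.
under eq_fun do rewrite big_mkcond.
apply: measurable_prod => s _; case: ((s, t) \in E); last exact: measurable_cst.
exact: measurableT_comp (measurable_powR _) (mZ _).
Qed.

Lemma has_beta_law_ae_itv01 {Z : Om -> R} {a b : R} :
  measurable_fun setT Z -> has_beta_law P Z a b -> {ae P, forall w, 0 <= Z w <= 1}.
Proof.
move=> mZ Zbeta; have mC01 : measurable (~` `[0, 1] : set R).
  by apply: measurableC; exact: measurable_itv.
exists (Z @^-1` ~` `[0, 1]); split.
- by rewrite -[_ @^-1` _]setTI; exact: mZ.
- by rewrite Zbeta // setICl integral_set0 /= mul0r.
- by move=> w /= Zw01; apply: Zw01; rewrite /= in_itv.
Qed.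

End Expectation.

Theorem proposition2 (R : realType) (S T : finType) (E : {set S * T})
    (alpha beta : S * T -> R)
    (d : measure_display) (Om : measurableType d) (P : probability Om R)
    (X : S * T -> {RV P >-> R})
    (Y : set (S -> R)) :
  (forall e, e \in E -> 0 <= alpha e /\ 0 <= beta e) ->
  (forall e, e \in E -> has_beta_law P (X e) (alpha e) (beta e)) ->
  mutually_independent P E (fun e => (X e : Om -> R)) ->
  (forall y, Y y -> forall s, 0 <= y s) ->
  convex_dom Y ->
  concave_on Y (fun y => influence E y (fun e => fine ('E_P[X e]))) /\
  concave_on Y (fun y => fine ('E_P[fun w => influence E y (fun e => X e w)])).
Proof.
move=> _ Xbeta _ Y_ge0 cY.
have concave_infl x : concave_on Y (influence E ^~ x).
  by move=> y1 y2 l /Y_ge0 y1_ge0 /Y_ge0 y2_ge0; exact: concave_influence.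
split; first exact: concave_infl.
have X01 : {ae P, forall w e, e \in E -> 0 <= X e w <= 1}.
  apply: filter_forall => e; have [eE|] := boolP (e \in E); last by move=> eE; apply: aeW.
  by apply: filterS (has_beta_law_ae_itv01 P (measurable_funP _) (Xbeta e eE)) => w.
apply: concave_on_expectation => [//|y Yy|w]; last exact: concave_infl.
apply: (integrable_ae_bounded P (ler0n _ #|T|)).
  by apply: measurable_influence => e; exact: measurable_funP.
apply: filterS X01 => w X01.
have /andP[I0 I1] := influence_bound E (Y_ge0 _ Yy) X01.
by rewrite ger0_norm.
Qed.
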